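(* Let $S$ and $S'$ be finite sets of pairwise disjoint axis-aligned rectangles in $\mathbb{R}^2$, and let $\mathcal{M}$ be a finite set of point-normal markers such that both $S$ and $S'$ are fully consistent with $\mathcal{M}$ (i.e. $\mathcal{M}$ is a marker-per-edge markup of both). Then $S=S'$.
   Context: An axis-aligned rectangle is a set $[a,b]\times[c,d]\subset\mathbb{R}^2$ with $a<b$, $c<d$. A (point-normal) marker is a pair $(p,n)$ with $p\in\mathbb{R}^2$ and $n\in\{(-1,0),(1,0),(0,1),(0,-1)\}$. A marker $(p,n)$ is on and aligned with an edge $e$ of a rectangle $Q$ if $p\in e$ and $n$ is the outward unit normal of $Q$ along $e$. A set of rectangles is consistent with a set of markers if every marker is on and aligned with an edge of one of the rectangles; it is fully consistent if moreover every edge of every rectangle in the set has at least one marker on and aligned with it. *)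

From Stdlib Require Import Reals List.
Open Scope R_scope.

(* A closed axis-aligned rectangle [ra,rb] x [rc,rd]; validity a<b, c<d is
   the predicate [is_rect]. *)
Record rect := mkRect { ra : R; rb : R; rc : R; rd : R }.

Definition is_rect (Q : rect) : Prop := ra Q < rb Q /\ rc Q < rd Q.

Definition point := (R * R)%type.

Definition in_rect (p : point) (Q : rect) : Prop :=
  ra Q <= fst p <= rb Q /\ rc Q <= snd p <= rd Q.

Definition rects_disjoint (Q1 Q2 : rect) : Prop :=
  forall p : point, ~ (in_rect p Q1 /\ in_rect p Q2).

Definition pairwise_disjoint (S : list rect) : Prop :=
  forall Q1 Q2, In Q1 S -> In Q2 S -> Q1 <> Q2 -> rects_disjoint Q1 Q2.

Inductive side := Left | Right | Top | Bottom.

Definition on_edge (p : point) (Q : rect) (s : side) : Prop :=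
  match s with
  | Left   => fst p = ra Q /\ rc Q <= snd p <= rd Q
  | Right  => fst p = rb Q /\ rc Q <= snd p <= rd Q
  | Top    => snd p = rd Q /\ ra Q <= fst p <= rb Q
  | Bottom => snd p = rc Q /\ ra Q <= fst p <= rb Q
  end.

Definition outward_normal (s : side) : point :=
  match s with
  | Left => (-1, 0) | Right => (1, 0) | Top => (0, 1) | Bottom => (0, -1)
  end.

Definition marker := (point * point)%type.

Definition is_marker (m : marker) : Prop :=
  snd m = (-1, 0) \/ snd m = (1, 0) \/ snd m = (0, 1) \/ snd m = (0, -1).

Definition on_and_aligned (m : marker) (Q : rect) (s : side) : Prop :=
  on_edge (fst m) Q s /\ snd m = outward_normal s.

Definition consistent (S : list rect) (M : list marker) : Prop :=
  forall m, In m M -> exists Q s, In Q S /\ on_and_aligned m Q s.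

Definition fully_consistent (S : list rect) (M : list marker) : Prop :=
  consistent S M /\
  forall Q s, In Q S -> exists m, In m M /\ on_and_aligned m Q s.

(* Take, in the symmetric difference of the two families, a rectangle Q whose
   bottom-left corner is lowest, then leftmost; say Q is in S.  Every edge of
   Q shares a point with the same-side edge of a rectangle of S', and such a
   rectangle cannot lie in S (it meets Q), so it is again in the symmetric
   difference.  The recurring move: if an edge of X in one family lies on a
   different line than the same-side edge of Y in the other family, the
   matching point of that edge lies outside Y, for otherwise its partner
   would meet Y, hence be Y.  Chasing the partners of the bottom and left
   edges of Q with this move always forces two distinct rectangles of one
   family to overlap; minimality of Q keeps every rectangle met along the way
   from starting below or to the left of Q. *)
From Stdlib Require Import Reals List Lra Classical.
Open Scope R_scope.

Lemma exists_min_in_list {A : Type} (le : A -> A -> Prop) :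
  (forall a b, le a b \/ le b a) -> (forall a b c, le a b -> le b c -> le a c) ->
  forall (P : A -> Prop) (L : list A), (exists x, In x L /\ P x) ->
  exists m, In m L /\ P m /\ forall y, In y L -> P y -> le m y.
Proof.
  intros Htotal Htrans P L. induction L as [|x L IH]; intros [y [Hy Py]].
  { destruct Hy. }
  assert (Hrefl : forall a, le a a) by (intro a; destruct (Htotal a a); auto).
  destruct (classic (exists z, In z L /\ P z)) as [HL | HL].
  - destruct (IH HL) as [m [Hm [Pm Hmin]]].
    destruct (classic (P x /\ le x m)) as [[Px Hxm] | Hx].
    + exists x. split; [left; reflexivity | split; auto].
      intros z [<- | Hz] Pz; eauto.
    + exists m. split; [right; exact Hm | split; auto].
      intros z [<- | Hz] Pz; auto.
      destruct (Htotal x m); tauto.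
  - destruct Hy as [<- | Hy]; [| exfalso; eauto].
    exists x. split; [left; reflexivity | split; auto].
    intros z [<- | Hz] Pz; [apply Hrefl | exfalso; eauto].
Qed.

Definition disjoint_rects (F : list rect) : Prop :=
  (forall Q, In Q F -> is_rect Q) /\ pairwise_disjoint F.

Definition edges_matched (F G : list rect) : Prop :=
  forall Q s, In Q F -> exists p R, In R G /\ on_edge p Q s /\ on_edge p R s.

Definition twin_families (F G : list rect) : Prop :=
  disjoint_rects F /\ disjoint_rects G /\ edges_matched F G /\ edges_matched G F.

Definition in_symdiff (F G : list rect) (R : rect) : Prop :=
  (In R F /\ ~ In R G) \/ (In R G /\ ~ In R F).

Definition below_left (Q R : rect) : Prop :=
  rc Q < rc R \/ (rc Q = rc R /\ ra Q <= ra R).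

Definition edge_line (Q : rect) (s : side) : R :=
  match s with Left => ra Q | Right => rb Q | Top => rd Q | Bottom => rc Q end.

Lemma below_left_total Q R : below_left Q R \/ below_left R Q.
Proof.
  unfold below_left. destruct (Rtotal_order (rc Q) (rc R)) as [|[|]];
    [| destruct (Rle_dec (ra Q) (ra R)) |]; lra.
Qed.

Lemma below_left_trans P Q R : below_left P Q -> below_left Q R -> below_left P R.
Proof. unfold below_left; lra. Qed.

Lemma twin_families_sym F G : twin_families F G -> twin_families G F.
Proof. unfold twin_families; tauto. Qed.

Lemma in_symdiff_sym F G R : in_symdiff F G R -> in_symdiff G F R.
Proof. unfold in_symdiff; tauto. Qed.

Lemma outward_normal_inj s s' : outward_normal s = outward_normal s' -> s = s'.
Proof.
  destruct s, s'; simpl; intro H; try reflexivity; injection H; intros; lra.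
Qed.

Lemma fully_consistent_edges_matched F G M :
  fully_consistent F M -> consistent G M -> edges_matched F G.
Proof.
  intros [_ HF] HG Q s HQ.
  destruct (HF Q s HQ) as [m [Hm [Hedge Hnormal]]].
  destruct (HG m Hm) as [R [s' [HR [Hedge' Hnormal']]]].
  rewrite Hnormal in Hnormal'. apply outward_normal_inj in Hnormal'. subst s'.
  exists (fst m), R. auto.
Qed.

Lemma in_rect_on_edge p Q s : is_rect Q -> on_edge p Q s -> in_rect p Q.
Proof. unfold is_rect, in_rect; destruct s; simpl; lra. Qed.

Lemma on_edge_same_line p Q R s :
  on_edge p Q s -> on_edge p R s -> edge_line Q s = edge_line R s.
Proof. destruct s; simpl; lra. Qed.

Lemma disjoint_rects_eq F Q R p : disjoint_rects F -> In Q F -> In R F ->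
  in_rect p Q -> in_rect p R -> Q = R.
Proof.
  intros [_ Hdisj] HQ HR pQ pR. apply NNPP. intro QR.
  exact (Hdisj Q R HQ HR QR p (conj pQ pR)).
Qed.

Lemma twin_not_in F G X Y p : disjoint_rects F -> In X F -> ~ In X G -> In Y G ->
  in_rect p X -> in_rect p Y -> ~ In Y F.
Proof.
  intros HF HX nX HY pX pY HYF.
  apply nX. rewrite (disjoint_rects_eq F X Y p); auto.
Qed.

Lemma matched_edge_escapes F G X Y s : twin_families F G -> In X F -> In Y G ->
  edge_line X s <> edge_line Y s ->
  exists p R, In R G /\ on_edge p X s /\ on_edge p R s /\ ~ in_rect p Y.
Proof.
  intros (_ & HG & HFG & _) HX HY Hline.
  destruct (HFG X s HX) as [p [R [HR [pX pR]]]].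
  exists p, R. repeat split; auto. intro pY.
  assert (R = Y) as <-.
  { apply (disjoint_rects_eq G R Y p); auto. apply (in_rect_on_edge p R s); auto.
    apply HG; auto. }
  apply Hline. exact (on_edge_same_line p X R s pX pR).
Qed.

Lemma twin_contained_eq F G A B : twin_families F G -> In A F -> In B G ->
  ra B <= ra A -> rb A <= rb B -> rc B <= rc A -> rd A <= rd B -> A = B.
Proof.
  intros Htwin HA HB Ha Hb Hc Hd.
  assert (is_rect A) as [] by (apply (proj1 (proj1 Htwin)); exact HA).
  assert (forall s, edge_line A s = edge_line B s) as Hlines.
  { intro s. apply NNPP. intro Hne.
    destruct (matched_edge_escapes F G A B s Htwin HA HB Hne)
      as [p [_ [_ [pA [_ pB]]]]].
    destruct s; unfold in_rect in pB; simpl in *; lra. }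
  destruct A, B.
  pose proof (Hlines Left); pose proof (Hlines Right);
    pose proof (Hlines Top); pose proof (Hlines Bottom).
  simpl in *; subst; reflexivity.
Qed.

Lemma same_corner_narrower_absurd F G A B : twin_families F G ->
  In A F -> ~ In A G -> In B G -> ~ In B F ->
  ra A = ra B -> rc A = rc B -> rb A < rb B ->
  (forall R, in_symdiff F G R -> rc A <= rc R) -> False.
Proof.
  intros Htwin HA nA HB nB Ha Hc Hb Hlowest.
  pose proof Htwin as (HF & HG & _).
  destruct (proj1 HF A HA), (proj1 HG B HB).
  destruct (matched_edge_escapes F G A B Right Htwin HA HB)
    as [p1 [_ [_ [p1A [_ p1B]]]]]; [simpl; lra|].
  simpl in p1A; unfold in_rect in p1B.
  assert (A_taller : rd B < rd A) by lra.
  destruct (matched_edge_escapes G F B A Top (twin_families_sym F G Htwin) HB HA)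
    as [p2 [V [HV [p2B [p2V p2A]]]]]; [simpl; lra|].
  simpl in p2B, p2V; unfold in_rect in p2A.
  destruct (proj1 HF V HV).
  assert (nV : ~ In V G).
  { apply (twin_not_in G F B V p2); auto; unfold in_rect; lra. }
  assert (rc A <= rc V) by (apply Hlowest; left; auto).
  assert (V_right_of_A : rb A < ra V).
  { apply Rnot_le_lt; intro.
    assert (V = A) as -> by (apply (disjoint_rects_eq F V A (rb A, rd B)); auto;
                             unfold in_rect; simpl; lra).
    lra. }
  destruct (matched_edge_escapes F G V B Left Htwin HV HB)
    as [p3 [_ [_ [p3V [_ p3B]]]]]; [simpl; lra|].
  simpl in p3V; unfold in_rect in p3B. lra.
Qed.

Lemma same_corner_absurd F G A B : twin_families F G ->
  In A F -> ~ In A G -> In B G -> ~ In B F ->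
  ra A = ra B -> rc A = rc B ->
  (forall R, in_symdiff F G R -> rc A <= rc R) -> False.
Proof.
  intros Htwin HA nA HB nB Ha Hc Hlowest.
  destruct (Rtotal_order (rb A) (rb B)) as [Hb | [Hb | Hb]].
  - exact (same_corner_narrower_absurd F G A B Htwin HA nA HB nB Ha Hc Hb Hlowest).
  - destruct (Rle_dec (rd A) (rd B)).
    + apply nA. rewrite (twin_contained_eq F G A B); auto; lra.
    + apply nB. rewrite (twin_contained_eq G F B A); auto using twin_families_sym; lra.
  - apply (same_corner_narrower_absurd G F B A); auto using twin_families_sym.
    intros R HR. rewrite <- Hc. apply Hlowest, in_symdiff_sym, HR.
Qed.

Lemma lowest_leftmost_absurd F G Q : twin_families F G -> In Q F -> ~ In Q G ->
  (forall R, in_symdiff F G R -> below_left Q R) -> False.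
Proof.
  intros Htwin HQ nQ Hmin.
  assert (Hlowest : forall R, in_symdiff F G R -> rc Q <= rc R)
    by (intros R HR; destruct (Hmin R HR) as [|[]]; lra).
  pose proof Htwin as (HF & HG & HFG & _).
  destruct (proj1 HF Q HQ).
  destruct (HFG Q Bottom HQ) as [p0 [Q' [HQ' [p0Q p0Q']]]]; simpl in p0Q, p0Q'.
  destruct (proj1 HG Q' HQ').
  assert (nQ' : ~ In Q' F)
    by (apply (twin_not_in F G Q Q' p0); auto; unfold in_rect; lra).
  assert (ra Q <= ra Q')
    by (destruct (Hmin Q' (or_intror (conj HQ' nQ'))) as [|[]]; lra).
  destruct (Req_dec (ra Q) (ra Q')) as [Ha | Ha].
  { apply (same_corner_absurd F G Q Q'); auto; lra. }
  destruct (matched_edge_escapes G F Q' Q Left (twin_families_sym F G Htwin) HQ' HQ)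
    as [p1 [_ [_ [p1Q' [_ p1Q]]]]]; [simpl; lra|].
  simpl in p1Q'; unfold in_rect in p1Q.
  assert (Q'_taller : rd Q < rd Q') by lra.
  destruct (HFG Q Left HQ) as [p2 [R' [HR' [p2Q p2R']]]]; simpl in p2Q, p2R'.
  destruct (proj1 HG R' HR').
  assert (nR' : ~ In R' F)
    by (apply (twin_not_in F G Q R' p2); auto; unfold in_rect; lra).
  destruct (Hmin R' (or_intror (conj HR' nR'))) as [Hc | [Hc _]].
  2: { apply (same_corner_absurd F G Q R'); auto; lra. }
  destruct (matched_edge_escapes G F R' Q Bottom (twin_families_sym F G Htwin) HR' HQ)
    as [p3 [_ [_ [p3R' [_ p3Q]]]]]; [simpl; lra|].
  simpl in p3R'; unfold in_rect in p3Q.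
  assert (R'_wider : rb Q < rb R') by lra.
  assert (R' = Q') as ->
    by (apply (disjoint_rects_eq G R' Q' (fst p0, snd p2)); auto;
        unfold in_rect; simpl; lra).
  lra.
Qed.

Lemma twin_families_symdiff_empty F G R : twin_families F G -> ~ in_symdiff F G R.
Proof.
  intros Htwin HR.
  assert (Hin : forall X, in_symdiff F G X -> In X (F ++ G))
    by (intros X HX; apply in_or_app; unfold in_symdiff in HX; tauto).
  destruct (exists_min_in_list below_left below_left_total below_left_trans
              (in_symdiff F G) (F ++ G)) as [Q [_ [HQ Hmin]]]; eauto.
  assert (Hmin' : forall X, in_symdiff F G X -> below_left Q X) by auto.
  destruct HQ as [[HQ nQ] | [HQ nQ]].
  - exact (lowest_leftmost_absurd F G Q Htwin HQ nQ Hmin').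
  - apply (lowest_leftmost_absurd G F Q); auto using twin_families_sym, in_symdiff_sym.
Qed.

Theorem mainTheorem14 (S S' : list rect) (M : list marker) :
  (forall Q, In Q S -> is_rect Q) ->
  (forall Q, In Q S' -> is_rect Q) ->
  pairwise_disjoint S -> pairwise_disjoint S' ->
  (forall m, In m M -> is_marker m) ->
  fully_consistent S M -> fully_consistent S' M ->
  forall Q, In Q S <-> In Q S'.
Proof.
  intros HrS HrS' HdS HdS' _ HfS HfS'.
  assert (Htwin : twin_families S S').
  { refine (conj (conj HrS HdS) (conj (conj HrS' HdS') (conj _ _))).
    - apply (fully_consistent_edges_matched S S' M HfS), HfS'.
    - apply (fully_consistent_edges_matched S' S M HfS'), HfS. }
  intro Q. pose proof (twin_families_symdiff_empty S S' Q Htwin) as HQ.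
  unfold in_symdiff in HQ. split; intro; apply NNPP; tauto.
Qed.
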